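(* Let $\mathbf{x}$ be an infinite word over a finite alphabet. Then $\mathrm{rep}(\mathbf{x})=1$ if and only if $\mathrm{dio}(\mathbf{x})=+\infty$, and $\mathrm{rep}(\mathbf{x})=+\infty$ if and only if $\mathrm{dio}(\mathbf{x})=1$. Furthermore, if $1<\mathrm{dio}(\mathbf{x})<+\infty$, then $$\mathrm{rep}(\mathbf{x})=\frac{\mathrm{dio}(\mathbf{x})}{\mathrm{dio}(\mathbf{x})-1}\le\frac{\mathrm{ice}(\mathbf{x})}{\mathrm{ice}(\mathbf{x})-1}$$ (the right-hand side being $+\infty$ if $\mathrm{ice}(\mathbf{x})=1$).
   Context: For $\mathbf{x}=x_1x_2\ldots$, $x_i^j=x_i\cdots x_j$, $r(n,\mathbf{x})=\min\{m\ge1:\ x_i^{i+n-1}=x_{m-n+1}^{m}\text{ for some } 1\le i\le m-n\}$ and $\mathrm{rep}(\mathbf{x})=\liminf_{n\to\infty}r(n,\mathbf{x})/n$. For a finite word $W$ and real $w\ge1$, $W^w$ is the concatenation of $\lfloor w\rfloor$ copies of $W$ followed by the prefix of $W$ of length $\lceil (w-\lfloor w\rfloor)|W|\rceil$. The initial critical exponent $\mathrm{ice}(\mathbf{x})$ is the supremum of the reals $\rho$ for which there are arbitrarily long prefixes $V$ of $\mathbf{x}$ such that $V^\rho$ is a prefix of $\mathbf{x}$. The Diophantine exponent $\mathrm{dio}(\mathbf{x})$ is the supremum of the reals $\rho$ for which there are arbitrarily long prefixes of $\mathbf{x}$ of the form $UV^w$, with $U,V$ finite words and $w$ real, such that $|UV^w|/|UV|\ge\rho$.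 One has $1\le\mathrm{ice}(\mathbf{x})\le\mathrm{dio}(\mathbf{x})\le+\infty$. *)

From HB Require Import structures.
From mathcomp Require Import all_boot all_order all_algebra.
From mathcomp Require Import all_classical all_reals.
From mathcomp Require Import ereal topology normedtype sequences.
Set Implicit Arguments. Unset Strict Implicit. Unset Printing Implicit Defensive.
Import Order.TTheory GRing.Theory Num.Theory.
Local Open Scope classical_set_scope.
Local Open Scope ring_scope.

(* An infinite word x = x_1 x_2 ... over a finite alphabet A is a map
   x : nat -> A, with the paper's letter x_k being  x (k-1)  (0-based). *)

Section Words.
Variable A : finType.
Variable R : realType.

Definition pref (x : nat -> A) (L : nat) : seq A := mkseq x L.

Definition is_prefix (x : nat -> A) (s : seq A) : Prop := s = pref x (size s).

Definition wpow (W : seq A) (w : R) : seq A :=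
  flatten (nseq (Num.truncn w) W) ++
  take `|Num.ceil ((w - (Num.truncn w)%:R) * (size W)%:R)|%N W.

(* m is admissible in the definition of r(n,x): m >= 1 and
   x_i^{i+n-1} = x_{m-n+1}^m for some 1 <= i <= m - n. *)
Definition r_adm (x : nat -> A) (n m : nat) : Prop :=
  (1 <= m)%N /\ exists i : nat, (1 <= i)%N /\ (i + n <= m)%N /\
    forall k : nat, (k < n)%N -> x (i - 1 + k)%N = x (m - n + k)%N.

(* r(n,x) = min of admissible m (as an extended real; it is +oo only if no
   admissible m exists, which never happens over a finite alphabet). *)
Definition rfun (x : nat -> A) (n : nat) : \bar R :=
  ereal_inf [set ((m%:R : R)%:E) | m in [set m | r_adm x n m]].

Definition rep (x : nat -> A) : \bar R :=
  limn_einf (fun n : nat => (rfun x n * ((n%:R : R)^-1)%:E)%E).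

Definition ice (x : nat -> A) : \bar R :=
  ereal_sup [set (rho%:E) | rho in [set rho : R | 1 <= rho /\
     forall N : nat, exists V : seq A,
       (N <= size V)%N /\ is_prefix x V /\ is_prefix x (wpow V rho)]].

Definition dio (x : nat -> A) : \bar R :=
  ereal_sup [set (rho%:E) | rho in [set rho : R |
     forall N : nat, exists (U V : seq A) (w : R),
       (0 < size V)%N /\ 1 <= w /\
       (N <= size (U ++ wpow V w))%N /\ is_prefix x (U ++ wpow V w) /\
       rho <= (size (U ++ wpow V w))%:R / (size (U ++ V))%:R]].

End Words.

(* If x has a prefix U V^w of length L >= rho |UV| with rho > 1, then the last
   L - |UV| letters of that prefix repeat the factor starting right after U, so
   r(L - |UV|, x) <= L <= (L - |UV|) rho/(rho - 1); hence rep <= rho/(rho - 1).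
   Conversely, if r(n, x) = m < c n, the two occurrences of the repeated factor
   force x_i ... x_m to be periodic, which writes x_1 ... x_m as U V^w with
   m / |UV| >= c/(c - 1).  So rep and dio are conjugate exponents on [1, +oo]
   (with 1 and +oo conjugate), and as conjugation reverses the order,
   ice <= dio gives the bound through ice. *)

From HB Require Import structures.
From mathcomp Require Import all_boot all_order all_algebra.
From mathcomp Require Import all_classical all_reals.
From mathcomp Require Import ereal topology normedtype sequences.
From mathcomp Require Import zify ring lra.
Set Implicit Arguments.
Unset Strict Implicit.
Unset Printing Implicit Defensive.
Import Order.TTheory GRing.Theory Num.Theory.
Local Open Scope ring_scope.

Section WordPowers.
Variables (R : realType) (A : finType).
Implicit Types (V : seq A) (w : R).

Lemma size_flatten_nseq V t : size (flatten (nseq t V)) = (t * size V)%N.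
Proof. by rewrite size_flatten /shape map_nseq sumn_nseq mulnC. Qed.

Lemma nth_flatten_nseq (d : A) V t j : (j < t * size V)%N ->
  nth d (flatten (nseq t V)) j = nth d V (j %% size V).
Proof.
elim: t j => [|t IH] j //=; rewrite mulSn nth_cat => hj.
case: ltnP => hjV; first by rewrite modn_small.
rewrite IH; last by lia.
by rewrite -{2}(subnK hjV) modnDr.
Qed.

Lemma nth_wpow (d : A) V w j : (j < size (wpow V w))%N ->
  nth d (wpow V w) j = nth d V (j %% size V).
Proof.
rewrite /wpow size_cat nth_cat size_flatten_nseq size_take_min => hj.
case: ltnP => hjt; first exact: nth_flatten_nseq.
rewrite nth_take; last by lia.
by rewrite -{2}(subnK hjt) addnC modnMDl modn_small //; lia.
Qed.

Lemma nth_wpow_period (d : A) V w j : (size V + j < size (wpow V w))%N ->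
  nth d (wpow V w) (size V + j) = nth d (wpow V w) j.
Proof. by move=> hj; rewrite !nth_wpow ?modnDl //; lia. Qed.

Lemma size_wpow V w : 0 <= w -> size (wpow V w) =
  (Num.truncn w * size V + `|Num.ceil ((w - (Num.truncn w)%:R) * (size V)%:R)|)%N.
Proof.
move=> w0; rewrite /wpow size_cat size_flatten_nseq size_take_min.
congr (_ + _)%N; apply/minn_idPl.
have /andP[tw wt] := truncn_itv w0.
set y := (w - _) * _.
have y0 : 0 <= y by rewrite mulr_ge0 // subr_ge0.
have yV : y <= (size V)%:R by rewrite ler_piMl //; rewrite -natr1 in wt; lra.
have : Num.ceil y <= (size V)%:Z by rewrite ceil_le_int.
have : 0 <= Num.ceil y by rewrite ceil_ge0 (lt_le_trans _ y0) // ltrN10.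
lia.
Qed.

Lemma size_wpow_ge V w : 0 <= w -> w * (size V)%:R <= (size (wpow V w))%:R.
Proof.
move=> w0; rewrite size_wpow // natrD natrM -[leLHS](subrK ((Num.truncn w)%:R * (size V)%:R)).
rewrite -mulrBl addrC lerD2l natr_absz (le_trans (ceil_ge _)) // ler_int ler_norm //.
Qed.

Lemma size_wpow_nat V w m : 0 <= w -> w * (size V)%:R = m%:R -> size (wpow V w) = m.
Proof.
move=> w0 wm; have tm : (Num.truncn w * size V <= m)%N.
  by rewrite -(ler_nat R) natrM -wm ler_wpM2r // truncn_le.
rewrite size_wpow // mulrBl wm -natrM -natrB // pmulrn intrKceil /=; lia.
Qed.
End WordPowers.

Lemma periodic_window (T : Type) (y : nat -> T) q n :
  (forall k, (k < n)%N -> y k = y (q + k)%N) ->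
  forall j, (j < q + n)%N -> y j = y (j %% q)%N.
Proof.
case: q => [|q] hy j; first by rewrite modn0.
elim/ltn_ind: j => j IH hj.
case: (ltnP j q.+1) => hjq; first by rewrite modn_small.
rewrite -(subnKC hjq) -hy; last by lia.
by rewrite IH ?modnDl //; lia.
Qed.

Section Prefixes.
Variables (R : realType) (A : finType) (x : nat -> A).

Lemma is_prefixP s :
  is_prefix x s <-> forall j, (j < size s)%N -> nth (x 0%N) s j = x j.
Proof.
split=> [-> j|hs]; first by rewrite size_mkseq => hj; rewrite nth_mkseq.
by apply: (@eq_from_nth _ (x 0%N)) => [|j hj]; rewrite ?size_mkseq ?hs ?nth_mkseq.
Qed.

Lemma pref_wpow_periodic s q M : (0 < q)%N ->
  (forall j, (j < M)%N -> x (s + j)%N = x (s + j %% q)%N) ->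
  pref x s ++ wpow (pref (fun j => x (s + j)%N) q) (M%:R / q%:R : R) = pref x (s + M).
Proof.
move=> q0 per; set V := pref _ q.
have sV : size V = q by rewrite size_mkseq.
have sW : size (wpow V (M%:R / q%:R : R)) = M.
  by apply: size_wpow_nat; rewrite ?divr_ge0 // sV divfK // pnatr_eq0 -lt0n.
apply: (@eq_from_nth _ (x 0%N)) => [|j]; first by rewrite size_cat sW !size_mkseq.
rewrite size_cat sW size_mkseq => hj; rewrite nth_mkseq // nth_cat size_mkseq.
case: ltnP => hjs; first by rewrite nth_mkseq.
rewrite nth_wpow ?sW; last by lia.
by rewrite sV nth_mkseq ?ltn_mod // -per ?subnKC //; lia.
Qed.

Lemma r_adm_prefix_wpow U V (w : R) : (0 < size V)%N ->
  is_prefix x (U ++ wpow V w) -> (size (U ++ V) < size (U ++ wpow V w))%N ->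
  r_adm x (size (U ++ wpow V w) - size (U ++ V)) (size (U ++ wpow V w)).
Proof.
move=> V0 /is_prefixP hx; rewrite !(size_cat U) => hlt.
split; first by lia.
exists (size U).+1; split=> //; split; first by lia.
move=> k hk; rewrite subn1 /=.
have -> : (size U + size (wpow V w) - (size U + size (wpow V w) - (size U + size V)) + k
  = size U + (size V + k))%N by lia.
have kW : (size V + k < size (wpow V w))%N by lia.
rewrite -(hx (size U + k)) ?(size_cat U) ?ltn_add2l; last by lia.
rewrite -(hx (size U + (size V + k))) ?(size_cat U) ?ltn_add2l //.
by rewrite !(nth_cat _ U) !ltnNge !leq_addr /= !addKn nth_wpow_period.
Qed.

Lemma rfun_le_adm n m : r_adm x n m -> (rfun R x n <= (m%:R)%:E)%E.
Proof. by move=> hm; apply: ereal_inf_lbound; exists m. Qed.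

End Prefixes.

Section HolderConjugate.
Variable R : realType.
Implicit Types (a b rho : R) (d e r : \bar R).

Definition hconj a : R := a / (a - 1).

Lemma hconj_gt1 a : 1 < a -> 1 < hconj a.
Proof. by move=> a1; rewrite /hconj ltr_pdivlMr; lra. Qed.

Lemma hconjK a : 1 < a -> hconj (hconj a) = a.
Proof.
move=> a1; have a1_neq0 : a - 1 != 0 by rewrite subr_eq0 gt_eqF.
rewrite /hconj (_ : a / (a - 1) - 1 = 1 / (a - 1)); last by field.
by field.
Qed.

Lemma ltr_hconj a b : 1 < a -> 1 < b -> (hconj a < hconj b) = (b < a).
Proof.
move=> a1 b1; rewrite /hconj ltr_pdivrMr ?subr_gt0 // mulrAC ltr_pdivlMr ?subr_gt0 //.
by rewrite !mulrBr !mulr1 [b * a]mulrC ltrD2l ltrN2.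
Qed.

Lemma hconj_le_div rho a b : 1 < rho -> 0 < b -> b < a ->
  (hconj rho <= a / (a - b)) = (a <= rho * b).
Proof.
move=> rho1 b0 ba; rewrite /hconj ler_pdivrMr ?subr_gt0 // mulrAC ler_pdivlMr ?subr_gt0 //.
by rewrite !mulrBr !mulr1 [a * rho]mulrC lerD2l lerN2.
Qed.

Lemma div_le_hconj rho a b : 1 < rho -> 0 < b -> b < a ->
  (a / (a - b) <= hconj rho) = (rho * b <= a).
Proof.
move=> rho1 b0 ba; rewrite /hconj ler_pdivrMr ?subr_gt0 // mulrAC ler_pdivlMr ?subr_gt0 //.
by rewrite !mulrBr !mulr1 [a * rho]mulrC lerD2l lerN2.
Qed.

Local Open Scope ereal_scope.

(* The conjugate exponent on [1, +oo], exchanging 1 and +oo; its values below 1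
   are junk. *)
Definition ehconj e : \bar R :=
  match e with
  | a%:E => if a == 1%R then +oo else (hconj a)%:E
  | +oo => 1
  | -oo => +oo
  end.

Lemma ehconjE a : a != 1%R -> ehconj a%:E = (hconj a)%:E.
Proof. by move=> /negbTE /= ->. Qed.

Lemma ehconj_ge1 e : 1 <= e -> 1 <= ehconj e.
Proof.
case: e => [a||] //=; rewrite lee_fin le_eqVlt => /predU1P[<-|a1].
  by rewrite eqxx leey.
by rewrite gt_eqF // lee_fin ltW // hconj_gt1.
Qed.

Lemma ehconjK e : 1 <= e -> ehconj (ehconj e) = e.
Proof.
case: e => [a||] //=; rewrite ?eqxx // lee_fin le_eqVlt => /predU1P[<-|a1].
  by rewrite eqxx.
by rewrite gt_eqF //= gt_eqF ?hconjK ?hconj_gt1.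
Qed.

Lemma ehconj_lt_of_lt d e : 1 <= e -> e < d -> ehconj d < ehconj e.
Proof.
case: e => [b||] // b1; last by rewrite ltNge leey.
have b1' : (1 <= b)%R by rewrite -lee_fin.
case: d => [a||] //= ba; last first.
  case: eqP => [_|/eqP b_neq1]; first by rewrite ltry.
  by rewrite lte_fin hconj_gt1 // lt_neqAle eq_sym b_neq1.
rewrite lte_fin in ba; have a1 : (1 < a)%R by apply: le_lt_trans ba.
rewrite gt_eqF //; case: eqP => [_|/eqP b_neq1]; first by rewrite ltry.
have {b_neq1}b1 : (1 < b)%R by rewrite lt_neqAle eq_sym b_neq1.
by rewrite lte_fin ltr_hconj.
Qed.

Lemma lt_ehconj d e : 1 <= d -> 1 <= e -> (ehconj d < ehconj e) = (e < d).
Proof.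
move=> d1 e1; apply/idP/idP; last exact: ehconj_lt_of_lt.
apply: contraLR; rewrite -!leNgt le_eqVlt => /predU1P[->//|de].
exact/ltW/ehconj_lt_of_lt.
Qed.

Lemma le_ehconj d e : 1 <= d -> 1 <= e -> (ehconj d <= ehconj e) = (e <= d).
Proof. by move=> d1 e1; rewrite !leNgt lt_ehconj. Qed.

Lemma EFin_between d e : d < e -> exists2 c : R, d < c%:E & c%:E < e.
Proof.
case: d => [a||]; case: e => [b||] //; rewrite ?lte_fin => ab.
- by exists ((a + b) / 2)%R; rewrite lte_fin; lra.
- by exists (a + 1)%R; rewrite ?ltry // lte_fin; lra.
- by exists (b - 1)%R; rewrite ?ltNyr // lte_fin; lra.
- by exists 0%R; rewrite ?ltry ?ltNyr.
Qed.

Lemma ehconj_unique r d : 1 <= r -> 1 <= d ->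
  (forall c : R, (1 < c)%R -> ehconj c%:E < d -> r <= c%:E) ->
  (forall c : R, (1 < c)%R -> r < c%:E -> ehconj c%:E <= d) ->
  r = ehconj d.
Proof.
move=> r1 d1 upper lower; have d'1 := ehconj_ge1 d1.
apply/le_anti/andP; split; rewrite leNgt; apply/negP.
- move=> /EFin_between[c dc cr].
  have c1 : (1 < c)%R by rewrite -lte_fin (le_lt_trans d'1).
  have c1E : 1 <= c%:E by rewrite lee_fin ltW.
  have := upper c c1; rewrite -{1}(ehconjK d1) lt_ehconj // => /(_ dc).
  by rewrite leNgt cr.
- move=> /EFin_between[c rc cd].
  have c1 : (1 < c)%R by rewrite -lte_fin (le_lt_trans r1).
  have c1E : 1 <= c%:E by rewrite lee_fin ltW.
  have := lower c c1 rc; rewrite -{1}(ehconjK d1) le_ehconj //.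
  by rewrite leNgt cd.
Qed.

End HolderConjugate.

Section Liminf.
Variable R : realType.
Local Open Scope ereal_scope.
Implicit Types (v : (\bar R)^nat) (b : \bar R).

Lemma limn_einfE v : limn_einf v = ereal_sup (range (einfs v)).
Proof. by rewrite limn_einf_lim; apply/cvg_lim => //; exact: cvg_einfs_sup. Qed.

Lemma limn_einf_ge v b N : (forall n, (N <= n)%N -> b <= v n) -> b <= limn_einf v.
Proof.
move=> hv; rewrite limn_einfE; apply: (@le_trans _ _ (einfs v N)).
  by apply: le_ereal_inf_tmp => _ [n Nn <-]; exact: hv.
by apply: ereal_sup_ubound; exists N.
Qed.

Lemma limn_einf_le_frequently v b :
  (forall N, exists2 n, (N <= n)%N & v n <= b) -> limn_einf v <= b.
Proof.
move=> hv; rewrite limn_einfE; apply: ge_ereal_sup => _ [N _ <-].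
by have [n Nn vnb] := hv N; apply: le_trans vnb; apply: ereal_inf_lbound; exists n.
Qed.

Lemma limn_einf_lt_frequently v b :
  limn_einf v < b -> forall N, exists2 n, (N <= n)%N & v n < b.
Proof.
rewrite limn_einfE => vb N.
have /ereal_inf_lt[_ [n Nn <-] vnb] : einfs v N < b.
  by apply: le_lt_trans vb; apply: ereal_sup_ubound; exists N.
by exists n.
Qed.

End Liminf.

Section Exponents.
Variables (R : realType) (A : finType) (x : nat -> A).

Definition dio_exponents : set R := [set rho : R |
  forall N : nat, exists (U V : seq A) (w : R),
    (0 < size V)%N /\ 1 <= w /\
    (N <= size (U ++ wpow V w))%N /\ is_prefix x (U ++ wpow V w) /\
    rho <= (size (U ++ wpow V w))%:R / (size (U ++ V))%:R].

Definition ice_exponents : set R := [set rho : R | 1 <= rho /\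
  forall N : nat, exists V : seq A,
    (N <= size V)%N /\ is_prefix x V /\ is_prefix x (wpow V rho)].

Local Open Scope ereal_scope.

Lemma dioE : dio R x = ereal_sup [set rho%:E | rho in dio_exponents].
Proof. by []. Qed.

Lemma iceE : ice R x = ereal_sup [set rho%:E | rho in ice_exponents].
Proof. by []. Qed.

Lemma ice_dio_exponents : (ice_exponents `<=` dio_exponents)%classic.
Proof.
move=> rho [rho1 hrho] N; have [V [NV [_ hW]]] := hrho N.+1.
have V0 : (0 < size V)%N by lia.
exists [::], V, rho; rewrite !cat0s; split=> //; split=> //; split; last split=> //.
  rewrite -(ler_nat R); apply: le_trans (size_wpow_ge V (le_trans ler01 rho1)).
  apply: (@le_trans _ _ (size V)%:R); first by rewrite ler_nat ltnW.
  by rewrite ler_peMl.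
by rewrite ler_pdivlMr ?ltr0n // size_wpow_ge // (le_trans ler01 rho1).
Qed.

Lemma ice_exponents1 : ice_exponents 1%R.
Proof.
split=> // N; exists (pref x N); rewrite /is_prefix size_mkseq; split=> //; split=> //.
by rewrite /wpow truncn1 /= cats0 subrr mul0r ceil0 /= take0 cats0 size_mkseq.
Qed.

Lemma ice_ge1 : 1 <= ice R x.
Proof. by rewrite iceE; apply: ereal_sup_ubound; exists 1%R => //; exact: ice_exponents1. Qed.

Lemma ice_le_dio : ice R x <= dio R x.
Proof.
rewrite iceE dioE; apply: ereal_sup_le => _ [rho hrho <-].
by exists rho => //; exact: ice_dio_exponents.
Qed.

Lemma dio_ge1 : 1 <= dio R x.
Proof. exact: le_trans ice_ge1 ice_le_dio. Qed.

Lemma rep_ge1 : 1 <= rep R x.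
Proof.
apply: (@limn_einf_ge _ _ _ 1%N) => n n1.
rewrite lee_pdivlMr ?ltr0n // mul1e.
apply: le_ereal_inf_tmp => _ [m [_ [i [i1 [inm _]]]] <-].
by rewrite lee_fin ler_nat; lia.
Qed.

Lemma rep_le_hconj rho : dio_exponents rho -> (1 < rho)%R -> rep R x <= (hconj rho)%:E.
Proof.
move=> hrho rho1; apply: limn_einf_le_frequently => N.
(* A witness of length >= N k with k > hconj rho has L - |UV| > N. *)
pose k := (Num.truncn (hconj rho)).+1.
have [U [V [w [V0 [_ [NkL [hpref hratio]]]]]]] := hrho (N * k)%N.
set L := size (U ++ wpow V w) in NkL hpref hratio *.
set p := size (U ++ V) in hratio *.
have p0 : (0 < p)%N by rewrite /p size_cat; lia.
have rhop : (rho * p%:R <= L%:R)%R by rewrite -ler_pdivlMr ?ltr0n.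
have pL : (p < L)%N.
  by rewrite -(ltr_nat R) (lt_le_trans _ rhop) // ltr_pMl ?ltr0n.
have ratio : (L%:R / (L - p)%N%:R <= hconj rho)%R.
  by rewrite natrB 1?ltnW // div_le_hconj // ?ltr0n ?ltr_nat.
exists (L - p)%N.
  have : (L%:R / (L - p)%N%:R < k%:R :> R)%R := le_lt_trans ratio (truncnS_gt _).
  by rewrite ltr_pdivrMr ?ltr0n ?subn_gt0 // -natrM ltr_nat; nia.
rewrite lee_pdivrMr ?ltr0n ?subn_gt0 // -EFinM.
apply: le_trans (rfun_le_adm R (r_adm_prefix_wpow V0 hpref pL)) _.
by rewrite lee_fin -ler_pdivrMr ?ltr0n ?subn_gt0.
Qed.

Lemma rep_lt_adm c : rep R x < c%:E ->
  forall N, exists n m, [/\ (N <= n)%N, r_adm x n m & (m%:R < c * n%:R)%R].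
Proof.
move=> hrep N; have [n Nn] := limn_einf_lt_frequently hrep N.+1.
rewrite lte_pdivrMr ?ltr0n; last by lia.
rewrite -EFinM => /ereal_inf_lt[_ [m hm <-]]; rewrite lte_fin => mcn.
by exists n, m; split=> //; lia.
Qed.

Lemma dio_exponents_hconj c : (1 < c)%R -> rep R x < c%:E -> dio_exponents (hconj c).
Proof.
move=> c1 hrep N.
have [n [m [Nn [m1 [i [i1 [inm hocc]]]] mcn]]] := rep_lt_adm hrep N.+1.
(* The factor of length n occurs at s and at s + q, so x_(s+1) ... x_m has
   period q. *)
set s := (i - 1)%N; set q := (m - n - s)%N.
have q0 : (0 < q)%N by rewrite /q /s; lia.
have per : forall j, (j < m - s)%N -> x (s + j)%N = x (s + j %% q)%N.
  have -> : (m - s = q + n)%N by rewrite /q /s; lia.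
  apply: (periodic_window (y := fun j => x (s + j)%N)) => k kn.
  by rewrite addnA (_ : s + q = m - n)%N ?hocc // /q /s; lia.
exists (pref x s), (pref (fun j => x (s + j)%N) q), ((m - s)%:R / q%:R)%R.
rewrite pref_wpow_periodic // (_ : s + (m - s) = m)%N; last by rewrite /s; lia.
split; first by rewrite size_mkseq.
split; first by rewrite ler_pdivlMr ?ltr0n // mul1r ler_nat /q; lia.
split; first by rewrite size_mkseq; lia.
split; first by rewrite /is_prefix size_mkseq.
rewrite size_cat !size_mkseq (_ : s + q = m - n)%N; last by rewrite /q /s; lia.
have n0 : (0 < n)%N by lia.
have nm : (n < m)%N by lia.
by rewrite natrB 1?ltnW // hconj_le_div ?ltr0n ?ltr_nat // ltW.
Qed.

Lemma rep_eq_ehconj_dio : rep R x = ehconj (dio R x).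
Proof.
apply: ehconj_unique; [exact: rep_ge1 | exact: dio_ge1 | move=> c c1 | move=> c c1 hc].
- rewrite ehconjE ?gt_eqF // dioE => /ereal_sup_gt[_ [rho hrho <-]].
  rewrite lte_fin => crho; have rho1 := lt_trans (hconj_gt1 c1) crho.
  apply: le_trans (rep_le_hconj hrho rho1) _.
  by rewrite lee_fin -[leRHS](hconjK c1) ltW // ltr_hconj // hconj_gt1.
- rewrite ehconjE ?gt_eqF // dioE; apply: ereal_sup_ubound.
  by exists (hconj c) => //; exact: dio_exponents_hconj.
Qed.

End Exponents.

Theorem lemma9p3 (R : realType) (A : finType) (x : nat -> A) :
  (rep R x = 1%E <-> dio R x = +oo%E) /\
  (rep R x = +oo%E <-> dio R x = 1%E) /\
  (forall d : R, dio R x = d%:E -> 1 < d ->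
     rep R x = (d / (d - 1))%:E /\
     (rep R x <= match ice R x with
                 | r%:E => if (r == 1)%R then +oo else ((r / (r - 1))%R)%:E
                 | +oo => 1
                 | -oo => +oo
                 end)%E).
Proof.
have dio1 : (1 <= dio R x)%E by exact: dio_ge1.
have repE : rep R x = ehconj (dio R x) by exact: rep_eq_ehconj_dio.
rewrite repE; split; [|split].
- by split=> [h|->//]; rewrite -(ehconjK dio1) h /= eqxx.
- split=> [h|->]; last by rewrite /= eqxx.
  by rewrite -(ehconjK dio1) h.
- move=> d hd d1; split; first by rewrite hd ehconjE // gt_eqF.
  change (ehconj (dio R x) <= ehconj (ice R x))%E.
  by rewrite le_ehconj ?ice_ge1 ?ice_le_dio.
Qed.
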